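(* Let $m\ge 1$ and $n=2^m$. Consider the algorithm $\textsc{MergeShuffle}$ on an array $T$ of $n$ elements with cut-off $k=m$: $T$ is divided into $2^m$ blocks of size $1$ (each trivially shuffled, with no random bits used), and then for $p=0,1,\dots,m-1$ each pair of adjacent blocks of size $2^p$ is merged into a block of size $2^{p+1}$ by the procedure $\textsc{Merge}$ (defined in the context). Then the expected total number of random bits used is $n\log_2 n+\Theta(n)$ as $n\to\infty$.
   Context: The procedure $\textsc{Merge}(T,s,n_1,n_2)$: set $i\gets s$, $j\gets s+n_1$, $n\gets s+n_1+n_2$. Repeat: draw an independent fair random bit; if it is $0$, then break out of the loop if $i=j$; if it is $1$, then break out of the loop if $j=n$, and otherwise swap $T[i]$ and $T[j]$ and set $j\gets j+1$; in either non-breaking case set $i\gets i+1$. After the loop, while $i<n$: draw an integer $m$ uniformly at random from $\{s,\dots,i\}$ (independently of everything else), swap $T[i]$ and $T[m]$, and set $i\gets i+1$. Cost model: each fair bit drawn costs one random bit, and drawing a uniform integer from a set of $K$ elements costs $\lceil \log_2 K\rceil$ random bits. *)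

From mathcomp Require Import all_boot all_order all_algebra.
Set Implicit Arguments. Unset Strict Implicit. Unset Printing Implicit Defensive.
Import Order.TTheory GRing.Theory Num.Theory.

(* Cost of drawing a uniform integer from a set of K elements: ceil(log2 K).
   up_log 2 K is the smallest e with K <= 2^e. *)
Definition clog2 (K : nat) : nat := up_log 2 K.

(* The first loop of Merge(T,s,n1,n2), reading fair bits from the stream
   [bits] starting at position [pos] (false = 0, true = 1).
   The fuel n1+n2+1 is always sufficient (each non-breaking step increments i). *)
Fixpoint merge_loop (fuel : nat) (bits : nat -> bool) (pos i j n : nat)
  : nat * nat :=
  match fuel with
  | 0 => (pos, i)
  | fuel'.+1 =>
      if ~~ bits pos then
        (if i == j then (pos.+1, i)
         else merge_loop fuel' bits pos.+1 i.+1 j n)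
      else
        (if j == n then (pos.+1, i)
         else merge_loop fuel' bits pos.+1 i.+1 j.+1 n)
  end.

(* The second loop draws, for each i from the final i to n-1, a uniform
   integer in {s,...,i} (i-s+1 elements), costing clog2 (i-s+1) bits.
   (The array contents and the values of the drawn integers do not
   influence the cost, so they are not modelled.) *)
Definition merge_cost (bits : nat -> bool) (pos s n1 n2 : nat) : nat * nat :=
  let n := s + n1 + n2 in
  let: (pos', i) := merge_loop (n1 + n2).+1 bits pos s (s + n1) n in
  (pos', (pos' - pos) + \sum_(i <= t < n) clog2 (t - s + 1)).

Definition merge_schedule (m : nat) : seq (nat * nat * nat) :=
  [seq (b * 2 ^ p.+1, 2 ^ p, 2 ^ p)
   | p <- iota 0 m, b <- iota 0 (2 ^ (m - p.+1))].

Definition mergeshuffle_cost (m : nat) (bits : nat -> bool) : nat :=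
  (foldl (fun (acc : nat * nat) (x : nat * nat * nat) =>
            let: (pos', c) := merge_cost bits acc.1 x.1.1 x.1.2 x.2 in
            (pos', acc.2 + c))
         (0, 0) (merge_schedule m)).2.

(* An upper bound on the number of fair bits the whole run can consume. *)
Definition stream_len (m : nat) : nat :=
  \sum_(x <- merge_schedule m) (x.1.2 + x.2).+1.

Definition stream_of (L : nat) (f : {ffun 'I_L -> bool}) (k : nat) : bool :=
  if insub k is Some i then f i else false.

(* Expected number of random bits used: average over uniformly random
   fair bit sequences of length stream_len m (later bits are never read). *)
Definition expected_cost (m : nat) : rat :=
  ((\sum_(f : {ffun 'I_(stream_len m) -> bool})
      (mergeshuffle_cost m (stream_of f))%:R) / (2 ^ stream_len m)%:R)%R.

From mathcomp Require Import all_boot all_order all_algebra.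
From mathcomp Require Import zify ring lra.
From Stdlib Require Import FunctionalExtensionality.
Set Implicit Arguments. Unset Strict Implicit. Unset Printing Implicit Defensive.
Import Order.TTheory GRing.Theory Num.Theory.
Local Open Scope ring_scope.

(* A merge of two blocks of size N = 2^P reads one fair bit per step until a bit
   points to an exhausted block, and then draws uniform integers from sets of size between
   2 and 2N, each costing between 1 and P + 1 bits. Hence it always costs at least
   2N + 1 bits and at most 2N + 1 + P D bits, where D is the number of elements
   left when the bit loop stops. A supermartingale argument gives
   E (D^2 + D) <= 2N, hence E D = O(1.5^P). Since each merge reads a prefix of
   the bit stream and leaves the rest fresh, the expected total cost is the sum
   of the expected merge costs, which over the 2^(m-P-1) merges of each level P
   adds up to m 2^m + 2^m - 1 plus at most 18 * 2^m. *)

Definition shift (k : nat) (b : nat -> bool) : nat -> bool := fun t => b (k + t)%N.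

Definition scons (x : bool) (s : nat -> bool) : nat -> bool :=
  fun t => if t is t'.+1 then s t' else x.

Lemma shiftD k p b : shift (k + p) b = shift p (shift k b).
Proof. by apply: functional_extensionality => t; rewrite /shift addnA. Qed.

Lemma shift_scons x s : shift 1 (scons x s) = s.
Proof. by []. Qed.

Lemma shiftS_scons p x s : shift p.+1 (scons x s) = shift p s.
Proof. by []. Qed.

Fixpoint avg (L : nat) (phi : (nat -> bool) -> rat) : rat :=
  if L is L'.+1 then
    (avg L' (fun s => phi (scons false s)) + avg L' (fun s => phi (scons true s))) / 2
  else phi (fun _ => false).

Definition reads_prefix (L : nat) (phi : (nat -> bool) -> rat) : Prop :=
  forall s s', (forall t, (t < L)%N -> s t = s' t) -> phi s = phi s'.

Section StreamAverage.
Implicit Types (L : nat) (phi psi : (nat -> bool) -> rat).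

Lemma avg_ext L phi psi : (forall s, phi s = psi s) -> avg L phi = avg L psi.
Proof. by move=> /functional_extensionality ->. Qed.

Lemma avg_cst L c : avg L (fun _ => c) = c.
Proof. by elim: L => //= L ->; field. Qed.

Lemma avgD L phi psi : avg L (fun s => phi s + psi s) = avg L phi + avg L psi.
Proof. by elim: L phi psi => //= L IH phi psi; rewrite !IH; field. Qed.

Lemma avgZ L c phi : avg L (fun s => c * phi s) = c * avg L phi.
Proof. by elim: L phi => //= L IH phi; rewrite !IH; field. Qed.

Lemma ler_avg L phi psi : (forall s, phi s <= psi s) -> avg L phi <= avg L psi.
Proof.
elim: L phi psi => [|L IH] phi psi le_phi_psi /=; first exact: le_phi_psi.
by rewrite ler_pM2r ?invr_gt0 // lerD // IH.
Qed.

Lemma avg_prefix k L phi : reads_prefix L phi -> avg (k + L) phi = avg L phi.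
Proof.
elim: L phi => [|L IH] phi phiL.
  rewrite addn0 -[RHS](avg_cst k); apply: avg_ext => s.
  by apply: phiL => t; rewrite ltn0.
by rewrite addnS /= !IH // => s s' ss'; apply: phiL => -[|t] //= /ss'.
Qed.

End StreamAverage.

Definition ffun_scons {L} (x : bool) (g : {ffun 'I_L -> bool}) : {ffun 'I_L.+1 -> bool} :=
  [ffun i => if unlift ord0 i is Some j then g j else x].

Lemma stream_of_scons L x (g : {ffun 'I_L -> bool}) :
  stream_of (ffun_scons x g) = scons x (stream_of g).
Proof.
apply: functional_extensionality => -[|k]; rewrite /stream_of /=.
  case: insubP => [i _ Ei | //].
  by rewrite (_ : i = ord0) ?ffunE ?unlift_none //; apply: val_inj.
case: insubP => [i ltkL Ei | geL]; case: insubP => [j ltk'L Ej | geL'] //.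
- have -> : i = lift ord0 j by apply: val_inj; rewrite /= Ei -Ej.
  by rewrite ffunE liftK.
- by move: ltkL geL'; lia.
- by move: geL ltk'L; lia.
Qed.

Lemma avg_ffun L phi :
  (\sum_(f : {ffun 'I_L -> bool}) phi (stream_of f)) / (2 ^ L)%:R = avg L phi.
Proof.
elim: L phi => [|L IH] phi.
  have stream0 (f : {ffun 'I_0 -> bool}) : stream_of f = (fun _ => false).
    by apply: functional_extensionality => k; rewrite /stream_of insubN.
  under eq_bigr => f _ do rewrite stream0.
  by rewrite sumr_const card_ffun card_ord /= expn0 mulr1n divr1.
pose split_head (f : {ffun 'I_L.+1 -> bool}) := (f ord0, [ffun j : 'I_L => f (lift ord0 j)]).
have scons_bij : {on [pred i | true],
    bijective (fun p : bool * {ffun 'I_L -> bool} => ffun_scons p.1 p.2)}.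
  exists split_head => [[x g] _ | f _].
    rewrite /split_head /ffun_scons /= ffunE unlift_none; congr pair.
    by apply/ffunP => j; rewrite !ffunE liftK.
  apply/ffunP => i; rewrite /split_head /ffun_scons /= ffunE.
  by case: unliftP => [j ->|->]; rewrite ?ffunE.
rewrite (reindex _ scons_bij) /=.
rewrite -(pair_big predT predT (fun x g => phi (stream_of (ffun_scons x g)))) big_bool /=.
under eq_bigr => g _ do rewrite stream_of_scons.
under [X in _ + X]eq_bigr => g _ do rewrite stream_of_scons.
rewrite -!(IH (fun s => phi (scons _ s))) expnS natrM.
have two_pow_neq0 : (2 ^ L)%:R != 0 :> rat by rewrite pnatr_eq0 expn_eq0.
by field.
Qed.

Definition merge_stops (x : bool) (i j n : nat) : bool := if x then j == n else i == j.

Section MergeLoop.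
Variables (n : nat).
Implicit Types (fuel pos i j : nat) (b s : nat -> bool).

Lemma merge_loop_shift fuel b k pos i j :
  merge_loop fuel b (k + pos) i j n =
  ((k + (merge_loop fuel (shift k b) pos i j n).1)%N,
   (merge_loop fuel (shift k b) pos i j n).2).
Proof.
elim: fuel pos i j => [|f IH] pos i j //=; rewrite -/(shift k b pos).
by case: (shift k b pos); case: ifP => //= _; rewrite -addnS ?IH.
Qed.

Lemma merge_loop_scons_stop fuel x s i j :
  merge_stops x i j n -> merge_loop fuel.+1 (scons x s) 0 i j n = (1%N, i).
Proof. by case: x => /= ->. Qed.

Lemma merge_loop_scons_step fuel x s i j :
  ~~ merge_stops x i j n ->
  merge_loop fuel.+1 (scons x s) 0 i j n =
  ((merge_loop fuel s 0 i.+1 (j + x) n).1.+1, (merge_loop fuel s 0 i.+1 (j + x) n).2).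
Proof.
by case: x => /= /negbTE ->; rewrite (merge_loop_shift _ _ 1 0) ?addn1 ?addn0.
Qed.

Lemma merge_loop_prefix fuel b b' pos i j :
  (forall t, (pos <= t < pos + fuel)%N -> b t = b' t) ->
  merge_loop fuel b pos i j n = merge_loop fuel b' pos i j n.
Proof.
elim: fuel pos i j => [//|f IH] pos i j bb' /=.
rewrite bb'; last by lia.
by case: (b' pos); case: ifP => // _; apply: IH => t ht; apply: bb'; lia.
Qed.

Lemma merge_loop_pos_le fuel b pos i j : ((merge_loop fuel b pos i j n).1 <= pos + fuel)%N.
Proof.
elim: fuel pos i j => [|f IH] pos i j /=; first by rewrite addn0.
by case: (b pos); case: ifP => _ /=; rewrite ?addnS ?ltnS ?leq_addr // -addSn IH.
Qed.

Lemma merge_loop_spec fuel b pos i j : (i <= j <= n)%N -> (n - i < fuel)%N ->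
  (i <= (merge_loop fuel b pos i j n).2 <= n)%N /\
  (merge_loop fuel b pos i j n).1 = (pos + ((merge_loop fuel b pos i j n).2 - i)).+1.
Proof.
elim: fuel pos i j => [|f IH] pos i j ijn; first by rewrite ltn0.
move=> lt_fuel /=; case: (b pos); case: ifP => /eqP stop /=; try (split; lia).
  by have [] := IH pos.+1 i.+1 j.+1 ltac:(lia) ltac:(lia); split; lia.
by have [] := IH pos.+1 i.+1 j ltac:(lia) ltac:(lia); split; lia.
Qed.

Lemma merge_loop_progress fuel b pos i j : (i < j < n)%N -> (n - i < fuel)%N ->
  (i < (merge_loop fuel b pos i j n).2)%N.
Proof.
case: fuel => [|f] ijn lt_fuel; first by rewrite ltn0 in lt_fuel.
rewrite /=; case: (b pos) => /=; rewrite ifN_eq; try lia.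
  by have [] := @merge_loop_spec f b pos.+1 i.+1 j.+1 ltac:(lia) ltac:(lia); lia.
by have [] := @merge_loop_spec f b pos.+1 i.+1 j ltac:(lia) ltac:(lia); lia.
Qed.

(* Strong Markov property: after the loop stops, the unread part of the
   stream is again a fresh fair stream. *)
Lemma avg_merge_loop_split fuel L (phi : nat * nat -> rat) psi i j :
  reads_prefix L psi ->
  avg (fuel + L) (fun b => phi (merge_loop fuel b 0 i j n)
                         + psi (shift (merge_loop fuel b 0 i j n).1 b))
  = avg fuel (fun b => phi (merge_loop fuel b 0 i j n)) + avg L psi.
Proof.
move=> psiL; elim: fuel phi i j => [|f IH] phi i j.
  by rewrite /= add0n avgD avg_cst.
have half (x : bool) : avg (f + L) (fun s => phi (merge_loop f.+1 (scons x s) 0 i j n)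
                 + psi (shift (merge_loop f.+1 (scons x s) 0 i j n).1 (scons x s)))
    = avg f (fun s => phi (merge_loop f.+1 (scons x s) 0 i j n)) + avg L psi.
  have [stop|go] := boolP (merge_stops x i j n).
    under avg_ext => s do rewrite merge_loop_scons_stop // shift_scons.
    under [in RHS]avg_ext => s do rewrite merge_loop_scons_stop //.
    by rewrite avgD !avg_cst avg_prefix.
  under avg_ext => s do rewrite merge_loop_scons_step // shiftS_scons.
  under [in RHS]avg_ext => s do rewrite merge_loop_scons_step //.
  exact: (IH (fun r => phi (r.1.+1, r.2))).
by rewrite addSn /= !half; field.
Qed.

End MergeLoop.

Implicit Types (b : nat -> bool) (x : nat * nat * nat) (sch : seq (nat * nat * nat)).

Definition merge_step b x : nat * nat := merge_cost b 0 x.1.1 x.1.2 x.2.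

Definition merge_fuel x : nat := (x.1.2 + x.2).+1.

Definition merge_loop_of b x : nat * nat :=
  merge_loop (merge_fuel x) b 0 x.1.1 (x.1.1 + x.1.2) (x.1.1 + x.1.2 + x.2).

Definition loop_cost x (r : nat * nat) : nat :=
  r.1 + \sum_(r.2 <= t < x.1.1 + x.1.2 + x.2) clog2 (t - x.1.1 + 1).

Lemma merge_stepE b x :
  merge_step b x = ((merge_loop_of b x).1, loop_cost x (merge_loop_of b x)).
Proof.
rewrite /merge_step /merge_cost /merge_loop_of /loop_cost.
by case: merge_loop => p i /=; rewrite subn0.
Qed.

Lemma merge_cost_shift b pos s n1 n2 :
  merge_cost b pos s n1 n2 =
  ((pos + (merge_cost (shift pos b) 0 s n1 n2).1)%N, (merge_cost (shift pos b) 0 s n1 n2).2).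
Proof.
rewrite /merge_cost -{1}[pos]addn0 merge_loop_shift.
by case: merge_loop => p i /=; rewrite addKn subn0.
Qed.

Fixpoint schedule_run sch b : nat * nat :=
  if sch is x :: sch' then
    let c := merge_step b x in
    let r := schedule_run sch' (shift c.1 b) in ((c.1 + r.1)%N, (c.2 + r.2)%N)
  else (0%N, 0%N).

Definition schedule_len sch : nat := \sum_(x <- sch) merge_fuel x.

Lemma foldl_merge_cost b sch pos acc :
  foldl (fun (acc : nat * nat) (x : nat * nat * nat) =>
           let: (pos', c) := merge_cost b acc.1 x.1.1 x.1.2 x.2 in (pos', (acc.2 + c)%N))
        (pos, acc) sch =
  ((pos + (schedule_run sch (shift pos b)).1)%N, (acc + (schedule_run sch (shift pos b)).2)%N).
Proof.
elim: sch pos acc => [|x sch IH] pos acc /=; first by rewrite !addn0.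
by rewrite merge_cost_shift /= IH -shiftD !addnA.
Qed.

Lemma mergeshuffle_cost_run m b : mergeshuffle_cost m b = (schedule_run (merge_schedule m) b).2.
Proof. by rewrite /mergeshuffle_cost foldl_merge_cost. Qed.

Lemma schedule_run_prefix sch b b' :
  (forall t, (t < schedule_len sch)%N -> b t = b' t) -> schedule_run sch b = schedule_run sch b'.
Proof.
elim: sch b b' => [//|x sch IH] b b' bb' /=.
rewrite /schedule_len big_cons in bb'.
have -> : merge_step b x = merge_step b' x.
  rewrite /merge_step /merge_cost (@merge_loop_prefix _ _ _ b') // => t ht.
  by apply: bb'; rewrite /merge_fuel; lia.
rewrite (IH _ (shift (merge_step b' x).1 b')) // => t ht; apply: bb'.
have := merge_loop_pos_le (x.1.1 + x.1.2 + x.2) (merge_fuel x) b' 0 x.1.1 (x.1.1 + x.1.2).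
have -> : (merge_step b' x).1 = (merge_loop_of b' x).1 by rewrite merge_stepE.
by rewrite -/(merge_loop_of b' x) -/(schedule_len sch); lia.
Qed.

Definition expected_merge_cost x : rat := avg (merge_fuel x) (fun b => (merge_step b x).2%:R).

Lemma avg_schedule_run sch :
  avg (schedule_len sch) (fun b => (schedule_run sch b).2%:R) =
  \sum_(x <- sch) expected_merge_cost x.
Proof.
elim: sch => [|x sch IH]; first by rewrite /schedule_len !big_nil.
rewrite big_cons -IH /schedule_len big_cons -/(schedule_len sch).
have runL : reads_prefix (schedule_len sch) (fun b => (schedule_run sch b).2%:R).
  by move=> s s' ss'; rewrite (schedule_run_prefix ss').
transitivity (avg (merge_fuel x + schedule_len sch) (fun b =>
    (loop_cost x (merge_loop_of b x))%:R
    + (schedule_run sch (shift (merge_loop_of b x).1 b)).2%:R)).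
  by apply: avg_ext => b; rewrite /= merge_stepE natrD.
rewrite /merge_loop_of (avg_merge_loop_split _ _ (fun r => (loop_cost x r)%:R) _ _ runL).
by congr (_ + _); apply: avg_ext => b; rewrite merge_stepE.
Qed.

Lemma expected_costE m : expected_cost m = \sum_(x <- merge_schedule m) expected_merge_cost x.
Proof.
rewrite /expected_cost (avg_ffun _ (fun b => (mergeshuffle_cost m b)%:R)) -avg_schedule_run.
by apply: avg_ext => b; rewrite mergeshuffle_cost_run.
Qed.

Definition gap_weight (n r : nat) : rat := (n - r)%N%:R ^+ 2 + (n - r)%N%:R.

(* With [a = j - i] and [b = n - j] the numbers of elements left in the two
   blocks, the potential is [(a - b)^2 + a + b]: each step changes [a - b]
   by [+-1] and [a + b] by [-1], and the potential equals [gap_weight n i]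
   whenever the loop stops. *)
Definition merge_potential (i j n : nat) : rat :=
  (2 * j%:R - i%:R - n%:R) ^+ 2 + (n - i)%N%:R.

Lemma avg_gap_weight_le fuel i j n : (i <= j <= n)%N -> (n - i < fuel)%N ->
  avg fuel (fun b => gap_weight n (merge_loop fuel b 0 i j n).2) <= merge_potential i j n.
Proof.
elim: fuel i j => [|f IH] i j ijn lt_fuel; first by rewrite ltn0 in lt_fuel.
have half (x : bool) : avg f (fun s => gap_weight n (merge_loop f.+1 (scons x s) 0 i j n).2) <=
    if merge_stops x i j n then gap_weight n i else merge_potential i.+1 (j + x) n.
  have [stop|go] := boolP (merge_stops x i j n).
    by under avg_ext => s do rewrite merge_loop_scons_stop //; rewrite avg_cst.
  under avg_ext => s do rewrite merge_loop_scons_step //.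
  by apply: IH; move: go; case: x => /=; lia.
apply: le_trans (ler_wpM2r _ (lerD (half false) (half true))) _ => //.
rewrite /= /gap_weight /merge_potential natrB; last by lia.
have le_in : i%:R <= n%:R :> rat by rewrite ler_nat; lia.
have le_ij : i%:R <= j%:R :> rat by rewrite ler_nat; lia.
have le_jn : j%:R <= n%:R :> rat by rewrite ler_nat; lia.
rewrite addn0 addn1.
case: (i =P j) => [eq_ij|ne_ij]; case: (j =P n) => [eq_jn|ne_jn]; try subst; first nra.
all: rewrite natrB ?natrS ?natrD; [nra | lia].
Qed.

Lemma merge_cost_bounds s P b :
  (2 * 2 ^ P + 1 <= (merge_step b (s, 2 ^ P, 2 ^ P)).2 <=
   2 * 2 ^ P + 1 + P * (s + 2 ^ P + 2 ^ P - (merge_loop_of b (s, 2 ^ P, 2 ^ P)).2))%N.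
Proof.
set x := (s, 2 ^ P, 2 ^ P)%N; set n := (s + 2 ^ P + 2 ^ P)%N.
rewrite merge_stepE /loop_cost /=.
have pow_gt0 : (0 < 2 ^ P)%N by rewrite expn_gt0.
have fuelP : (n - s < merge_fuel x)%N by rewrite /merge_fuel /n /=; lia.
have [/andP[le_sr le_rn] posE] :=
  merge_loop_spec b 0 (i := s) (j := s + 2 ^ P) (n := n) ltac:(lia) fuelP.
have lt_sr := merge_loop_progress b 0 (i := s) (j := s + 2 ^ P) (n := n) ltac:(lia) fuelP.
rewrite -/(merge_loop_of b x) in le_sr le_rn posE lt_sr *; rewrite posE.
set r := (merge_loop_of b x).2 in le_sr le_rn posE lt_sr *.
(* each uniform draw is from a set of between 2 and 2^(P+1) integers *)
have clog2_ge : (\sum_(r <= t < n) 1 <= \sum_(r <= t < n) clog2 (t - s + 1))%N.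
  by rewrite !big_nat; apply: leq_sum => t /andP[? ?]; rewrite /clog2 up_log_gt0; lia.
have clog2_le : (\sum_(r <= t < n) clog2 (t - s + 1) <= \sum_(r <= t < n) P.+1)%N.
  rewrite !big_nat; apply: leq_sum => t /andP[? ?]; apply: up_log_min => //; rewrite expnS; lia.
rewrite !sum_nat_const_nat in clog2_ge clog2_le.
by rewrite -/n; apply/andP; split; nia.
Qed.

Lemma expected_merge_cost_ge s P :
  (2 * 2 ^ P + 1)%N%:R <= expected_merge_cost (s, 2 ^ P, 2 ^ P)%N.
Proof.
rewrite -[X in X <= _](avg_cst (merge_fuel (s, 2 ^ P, 2 ^ P)%N)).
by apply: ler_avg => b; rewrite ler_nat; case/andP: (merge_cost_bounds s P b).
Qed.

(* [E (D^2 + D) <= 2^(P+1)] and [D <= (D^2 + D) / t + t] for every [t > 0];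
   take [t = (3/2)^P]. *)
Lemma avg_merge_gap_le s P :
  avg (merge_fuel (s, 2 ^ P, 2 ^ P)%N)
      (fun b => (s + 2 ^ P + 2 ^ P - (merge_loop_of b (s, 2 ^ P, 2 ^ P)%N).2)%N%:R)
  <= 3 * (3 / 2) ^+ P.
Proof.
set x := (s, 2 ^ P, 2 ^ P)%N; set n := (s + 2 ^ P + 2 ^ P)%N; set t : rat := (3 / 2) ^+ P.
have t_gt0 : 0 < t by rewrite exprn_gt0.
apply: (le_trans
  (y := avg (merge_fuel x) (fun b => t^-1 * gap_weight n (merge_loop_of b x).2 + t))).
  apply: ler_avg => b; rewrite /gap_weight; set D := (n - _)%N%:R.
  have D_ge0 : 0 <= D by rewrite ler0n.
  rewrite -subr_ge0 (_ : _ - D = (D ^+ 2 + D + t ^+ 2 - D * t) / t); last by field; rewrite gt_eqF.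
  apply: divr_ge0; last exact: ltW.
  rewrite (_ : _ - _ = (D - t) ^+ 2 + D * t + D); last by ring.
  by rewrite !addr_ge0 ?sqr_ge0 ?mulr_ge0 // ltW.
rewrite avgD avgZ avg_cst.
have avg_gap : avg (merge_fuel x) (fun b => gap_weight n (merge_loop_of b x).2) <= (2 * 2 ^ P)%N%:R.
  have -> : (2 * 2 ^ P)%N%:R = merge_potential s (s + 2 ^ P) n.
    by rewrite /merge_potential /n (_ : (s + 2 ^ P + 2 ^ P - s = 2 * 2 ^ P)%N) ?natrD; [ring | lia].
  by apply: avg_gap_weight_le; rewrite /merge_fuel /n /=; lia.
have pow_le : (2 ^ P)%N%:R <= t ^+ 2.
  by rewrite natrX /t -exprM mulnC exprM; apply: lerXn2r; rewrite ?nnegrE; lra.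
have tV_ge0 : 0 <= t^-1 by rewrite invr_ge0 ltW.
have := ler_wpM2l tV_ge0 (le_trans avg_gap (_ : _ <= 2 * t ^+ 2)).
rewrite (_ : t^-1 * (2 * t ^+ 2) = 2 * t); last by field; rewrite gt_eqF.
by move=> /(_ ltac:(rewrite natrM; lra)); lra.
Qed.

Lemma expected_merge_cost_le s P :
  expected_merge_cost (s, 2 ^ P, 2 ^ P)%N <= (2 * 2 ^ P + 1)%N%:R + P%:R * (3 * (3 / 2) ^+ P).
Proof.
apply: (le_trans (y := avg (merge_fuel (s, 2 ^ P, 2 ^ P)%N) (fun b => (2 * 2 ^ P + 1)%N%:R
   + P%:R * (s + 2 ^ P + 2 ^ P - (merge_loop_of b (s, 2 ^ P, 2 ^ P)%N).2)%N%:R))).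
  by apply: ler_avg => b; rewrite -natrM -natrD ler_nat; case/andP: (merge_cost_bounds s P b).
by rewrite avgD avg_cst avgZ lerD2l ler_wpM2l ?ler0n ?avg_merge_gap_le.
Qed.

Lemma sum_mul_geomE (R : fieldType) (x : R) N : x != 1 ->
  \sum_(0 <= p < N) p%:R * x ^+ p = x / (1 - x) ^+ 2 - (N%:R / (1 - x) + x / (1 - x) ^+ 2) * x ^+ N.
Proof.
move=> x_neq1; have x1_neq0 : 1 - x != 0 by rewrite subr_eq0 eq_sym.
elim: N => [|N IH]; first by rewrite big_geq // expr0 mulr1 mul0r add0r subrr.
by rewrite big_nat_recr //= IH [x ^+ N.+1]exprS -natr1; field.
Qed.

Lemma sum_mul_geom_le (R : realFieldType) (x : R) N : 0 <= x < 1 ->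
  \sum_(0 <= p < N) p%:R * x ^+ p <= x / (1 - x) ^+ 2.
Proof.
case/andP=> x_ge0 x_lt1; rewrite sum_mul_geomE ?lt_eqF // gerBl.
have x1_gt0 : 0 < 1 - x by rewrite subr_gt0.
by rewrite mulr_ge0 ?exprn_ge0 // addr_ge0 // divr_ge0 ?exprn_ge0 // ltW.
Qed.

Lemma sum_level_sizes m :
  (\sum_(0 <= p < m) (2 * 2 ^ p + 1) * 2 ^ (m - p.+1)).+1 = ((m + 1) * 2 ^ m)%N.
Proof.
elim: m => [|m IH]; first by rewrite big_geq.
rewrite big_nat_recr //= subnn expn0 muln1.
rewrite (eq_big_nat _ _ (F2 := fun p => 2 * ((2 * 2 ^ p + 1) * 2 ^ (m - p.+1)))%N); last first.
  by move=> p /andP[_ lt_pm]; rewrite subSS -(subnSK lt_pm) expnS mulnCA.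
rewrite -big_distrr /= expnS; lia.
Qed.

Lemma level_weight m p : (p < m)%N ->
  (2 ^ (m - p.+1))%N%:R * (3 / 2) ^+ p = (2 ^ m)%N%:R * (3 / 4) ^+ p / 2 :> rat.
Proof.
move=> lt_pm; rewrite -[in RHS](subnK lt_pm) expnD expnS !natrM !natrX.
have -> : (3 / 2 : rat) ^+ p = 2 ^+ p * (3 / 4) ^+ p by rewrite -exprMn; congr (_ ^+ _); field.
by field.
Qed.

Definition level_cost m p : rat :=
  \sum_(b <- iota 0 (2 ^ (m - p.+1))) expected_merge_cost (b * 2 ^ p.+1, 2 ^ p, 2 ^ p)%N.

Lemma expected_cost_levels m : expected_cost m = \sum_(0 <= p < m) level_cost m p.
Proof. by rewrite expected_costE /merge_schedule big_allpairs_dep /index_iota subn0. Qed.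

Lemma sumr_iota_const (c : rat) K : \sum_(b <- iota 0 K) c = c *+ K.
Proof. by rewrite -{1}(subn0 K) -/(index_iota 0 K) sumr_const_nat subn0. Qed.

Lemma sum_level_cost_ge m : ((m + 1) * 2 ^ m)%N%:R - 1 <= \sum_(0 <= p < m) level_cost m p.
Proof.
rewrite -(sum_level_sizes m) -addn1 natrD addrK natr_sum ler_sum // => p _.
rewrite natrM mulr_natr -sumr_iota_const ler_sum // => b _.
exact: expected_merge_cost_ge.
Qed.

Lemma sum_level_cost_le m :
  \sum_(0 <= p < m) level_cost m p <= ((m + 1) * 2 ^ m)%N%:R + 18 * (2 ^ m)%N%:R.
Proof.
rewrite -(sum_level_sizes m) -addn1 natrD.
apply: (le_trans (y := \sum_(0 <= p < m)
  (((2 * 2 ^ p + 1) * 2 ^ (m - p.+1))%N%:R + (2 ^ m)%N%:R * (3 / 2) * (p%:R * (3 / 4) ^+ p)))).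
  rewrite big_nat [X in _ <= X]big_nat ler_sum // => p /andP[_ lt_pm].
  have -> : (2 ^ m)%N%:R * (3 / 2) * (p%:R * (3 / 4) ^+ p)
            = (p%:R * (3 * (3 / 2) ^+ p)) *+ 2 ^ (m - p.+1) :> rat.
    rewrite -mulr_natr; transitivity (3 * p%:R * ((2 ^ (m - p.+1))%N%:R * (3 / 2) ^+ p) : rat).
      by rewrite level_weight //; field.
    by ring.
  rewrite natrM mulr_natr -mulrnDl -sumr_iota_const ler_sum // => b _.
  exact: expected_merge_cost_le.
rewrite big_split /= -natr_sum -mulr_sumr -addrA lerD2l.
have S_le : \sum_(0 <= p < m) p%:R * (3 / 4 : rat) ^+ p <= 12.
  have := @sum_mul_geom_le rat (3 / 4) m.
  rewrite (_ : 3 / 4 / (1 - 3 / 4) ^+ 2 = 12 :> rat); last by field.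
  by apply; apply/andP; split; lra.
have pow_ge0 : 0 <= (2 ^ m)%N%:R :> rat by rewrite ler0n.
have := ler_wpM2l pow_ge0 S_le; lra.
Qed.

Theorem mainTheorem3 :
  exists (c1 c2 : rat) (M : nat), 0 < c1 /\ 0 < c2 /\
    forall m : nat, (1 <= m)%N -> (M <= m)%N ->
      c1 * (2 ^ m)%:R <= expected_cost m - (m * 2 ^ m)%:R <= c2 * (2 ^ m)%:R.
Proof.
exists (1 / 2), 19, 0%N; do 2 (split; first lra).
move=> m m_ge1 _; rewrite expected_cost_levels.
have pow_ge2 : 2 <= (2 ^ m)%N%:R :> rat.
  by rewrite (_ : 2 = (2 ^ 1)%N%:R) // ler_nat leq_exp2l.
have := sum_level_cost_ge m; have := sum_level_cost_le m.
rewrite !natrM natrD => le_hi ge_lo.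
by apply/andP; split; lra.
Qed.
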